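(* For all positive integers $n,t$ and $q\ge2$, the Hamming graph $H(tn,q)$ covers the multigraph $tH(n,q)$.
   Context: The Hamming graph $H(n,q)$ has vertex set $\mathbb{Z}_q^n$, two vertices adjacent iff they differ in exactly one coordinate. For a multigraph $G$ and positive integer $t$, $tG$ denotes the multigraph in which every edge and loop of $G$ has multiplicity $t$ times its multiplicity in $G$. A multigraph $G=(V,E)$ covers a multigraph $H=(U,W)$ if there is a surjective map $\varphi:V\to U$ such that for every $v\in V$ the multiset $\{\varphi(u): (u,v)\in E\}$ equals the multiset of neighbours of $\varphi(v)$ in $H$ (with multiplicities). *)

From mathcomp Require Import all_boot.
Set Implicit Arguments. Unset Strict Implicit. Unset Printing Implicit Defensive.

(* A (finite, undirected) multigraph on a finite vertex type V is given by its
   multiplicity function: [m x y] = number of edges between x and y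
   ([m x x] = number of loops at x). *)
Definition multigraph (V : finType) := V -> V -> nat.

Definition symmetric_mg (V : finType) (m : multigraph V) : Prop :=
  forall x y, m x y = m y x.

(* Vertex set Z_q^n represented as functions 'I_n -> 'I_q. *)
Definition hvert (n q : nat) : finType := {ffun 'I_n -> 'I_q}.

Definition hamming (n q : nat) : multigraph (hvert n q) :=
  fun x y => nat_of_bool (#|[set i | x i != y i]| == 1).

Definition scale_mg (V : finType) (t : nat) (m : multigraph V) : multigraph V :=
  fun x y => t * m x y.

(* G covers H: a surjection phi : V -> U such that for every v, the multiset
   {phi u : u neighbour of v in G} equals the neighbour multiset of phi v in H,
   i.e. for every w in U, the number of G-edges from v to vertices mapped to w
   equals the H-multiplicity between phi v and w. *)
Definition covers (V U : finType) (mG : multigraph V) (mH : multigraph U) : Prop :=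
  exists phi : V -> U,
    (forall w : U, exists v : V, phi v = w) /\
    (forall (v : V) (w : U), \sum_(u : V | phi u == w) mG v u = mH (phi v) w).

Arguments hamming : clear implicits.
Arguments scale_mg {V} t m _ _.

From mathcomp Require Import all_boot all_algebra.

Set Implicit Arguments.
Unset Strict Implicit.
Unset Printing Implicit Defensive.

(* Group the coordinates of Z_q^(tn) into n classes of t
   coordinates (k in class k mod n) and send x to the vector of its class sums
   in Z_q^n.  Changing one coordinate of v changes exactly one class sum, so a
   neighbour of v maps to w only if w differs from the image of v in exactly
   one class j; conversely, for each of the t coordinates k in class j there
   is exactly one value of v_k that moves the j-th class sum to w_j.  Hence
   each edge of H(n,q) at the image of v is hit exactly t times. *)

Section Differ.
Variables (I : finType) (T : eqType).
Implicit Types (x y : {ffun I -> T}) (k : I) (a : T).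

Definition differ x y : {set I} := [set i | x i != y i].

Definition ffun_upd x k a : {ffun I -> T} :=
  [ffun j => if j == k then a else x j].

Lemma ffun_upd_same x k a : ffun_upd x k a k = a.
Proof. by rewrite ffunE eqxx. Qed.

Lemma eq_ffun_upd x y k a :
  (ffun_upd x k a == y) = (y == ffun_upd x k (y k)) && (y k == a).
Proof.
apply/eqP/andP => [<- | [/eqP yE /eqP yk]]; last by rewrite yE yk.
by rewrite ffun_upd_same; split=> //; apply/eqP/ffunP => j; rewrite !ffunE; case: eqP.
Qed.

Lemma ffun_upd_inj x k a b : (ffun_upd x k a == ffun_upd x k b) = (a == b).
Proof.
apply/eqP/eqP => [/(congr1 (fun y => y k)) | -> //].
by rewrite !ffunE eqxx.
Qed.

Lemma differ_eq_set1 x y k :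
  (differ x y == [set k]) = (y == ffun_upd x k (y k)) && (y k != x k).
Proof.
apply/eqP/andP => [/setP dxy | [/eqP-> ]].
  split; last by have := dxy k; rewrite !inE eqxx eq_sym.
  apply/eqP/ffunP => j; rewrite ffunE; case: eqP => [-> // | /eqP jk].
  by have := dxy j; rewrite !inE (negPf jk) => /negbFE/eqP.
rewrite ffun_upd_same => ykx; apply/setP => j; rewrite !inE ffunE.
by case: (j =P k) => [-> | _]; rewrite ?eqxx // eq_sym.
Qed.

End Differ.

Lemma card_eq1_sum (I : finType) (S : {set I}) :
  (#|S| == 1) = \sum_k (S == [set k]) :> nat.
Proof.
have [/cards1P[k0 ->] | S_not1] := boolP (#|S| == 1).
  rewrite (bigD1 k0) //= eqxx big1 // => k /negPf nk.
  by rewrite (inj_eq set1_inj) eq_sym nk.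
rewrite big1 // => k _; case: eqP => // Sk.
by move: S_not1; rewrite Sk cards1.
Qed.

Section FibreSum.
Import GRing.Theory.
Local Open Scope ring_scope.
Variables (I J : finType) (G : finZmodType) (f : I -> J).
Implicit Types (u v : {ffun I -> G}) (w : {ffun J -> G}).

Definition fibre_sum v : {ffun J -> G} := [ffun j => \sum_(k | f k == j) v k].

Lemma fibre_sum_upd v k a :
  fibre_sum (ffun_upd v k a) =
  ffun_upd (fibre_sum v) (f k) (fibre_sum v (f k) + (a - v k)).
Proof.
apply/ffunP => j; rewrite !ffunE; under eq_bigr => i _ do rewrite ffunE.
have [-> | jk] := eqVneq j (f k).
  rewrite [LHS](bigD1 k) // [in RHS](bigD1 k) //= eqxx addrAC subrKC.
  congr (_ + _).
  by apply: eq_bigr => i /andP[_ /negPf->].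
by apply: eq_bigr => i /eqP fi; case: eqP => // ik; rewrite -fi ik eqxx in jk.
Qed.

Lemma fibre_sum_neighbour v w k u :
  (fibre_sum u == w) && (differ v u == [set k]) =
  (u == ffun_upd v k (v k + (w (f k) - fibre_sum v (f k)))) &&
  (differ (fibre_sum v) w == [set f k]).
Proof.
rewrite !differ_eq_set1.
have [uE | u_not] := eqVneq u (ffun_upd v k (u k)); last first.
  rewrite andbF; apply/esym/andP => -[/eqP uE _].
  by rewrite {2}uE ffun_upd_same -uE eqxx in u_not.
move: (u k) uE => b ->; rewrite fibre_sum_upd ffun_upd_inj eq_ffun_upd /=.
set X := fibre_sum v (f k); set d := w (f k) - X.
have shift : (w (f k) == X + (b - v k)) = (b == v k + d).
  by rewrite addrC -subr_eq eq_sym subr_eq [d + _]addrC.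
rewrite shift; case: (b =P v k + d) => [-> | _]; last by rewrite !andbF.
rewrite andbT; congr (_ && _).
by rewrite -subr_eq0 [_ - v k]addrC addKr subr_eq0.
Qed.

Lemma fibre_sum_surj (g : J -> I) : cancel g f ->
  forall w, exists v, fibre_sum v = w.
Proof.
move=> gK w; exists [ffun k => if g (f k) == k then w (f k) else 0].
apply/ffunP => j; rewrite ffunE (bigD1 (g j)) ?gK //= ffunE gK eqxx.
by rewrite big1 ?addr0 // => k /andP[/eqP <- kg]; rewrite ffunE eq_sym (negPf kg).
Qed.

End FibreSum.

Section FibreCover.
Variables (I J : finType) (G : finZmodType) (f : I -> J).
Implicit Types (u v : {ffun I -> G}) (w : {ffun J -> G}).

Lemma card_neighbours_at v w k :
  \sum_(u | fibre_sum f u == w) (differ v u == [set k]) =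
  (differ (fibre_sum f v) w == [set f k]).
Proof.
transitivity (\sum_u ((fibre_sum f u == w) && (differ v u == [set k]) : nat)).
  by rewrite big_mkcond; apply: eq_bigr => u _; case: ifP.
under eq_bigr => u _ do rewrite fibre_sum_neighbour.
pose u0 := ffun_upd v k (v k + (w (f k) - fibre_sum f v (f k)))%R.
by rewrite (bigD1 u0) //= eqxx big1 ?addn0 // => u /negPf->.
Qed.

Lemma card_neighbours_in_fibre (t : nat) :
  (forall j, #|[pred k | f k == j]| = t) ->
  forall v w, \sum_(u | fibre_sum f u == w) (#|differ v u| == 1) =
              t * (#|differ (fibre_sum f v) w| == 1).
Proof.
move=> fibreE v w.
under eq_bigr => u _ do rewrite card_eq1_sum.
rewrite exchange_big /=; under eq_bigr => k _ do rewrite card_neighbours_at.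
rewrite (partition_big f xpredT) //= card_eq1_sum big_distrr /=.
apply: eq_bigr => j _; rewrite -(fibreE j) -sum_nat_const.
by apply: eq_bigr => k /eqP ->.
Qed.

End FibreCover.

Lemma covers_hamming_scale (m n q t : nat) (f : 'I_m -> 'I_n)
    (g : 'I_n -> 'I_m) :
  cancel g f -> (forall j, #|[pred k | f k == j]| = t) ->
  covers (hamming m q.+1) (scale_mg t (hamming n q.+1)).
Proof.
move=> gK fibreE; exists (fibre_sum (G := 'I_q.+1) f); split.
  exact: fibre_sum_surj gK.
exact: card_neighbours_in_fibre.
Qed.

Lemma card_mod_fibre (t n i : nat) :
  i < n -> #|[pred k : 'I_(t * n) | k %% n == i]| = t.
Proof.
move=> lt_in; rewrite -sum1_card big_mkcond /=.
rewrite -(big_mkord xpredT (fun k => nat_of_bool (k %% n == i))).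
elim: t => [|t IHt]; first by rewrite mul0n big_geq.
rewrite mulSn addnC (big_cat_nat _ (leq_addr _ _)) //= IHt -{1}(add0n (t * n)).
rewrite big_addn addKn -addn1; congr (_ + _).
under eq_bigr => k _ do rewrite addnC modnMDl.
rewrite big_mkord (bigD1 (Ordinal lt_in)) //= modn_small // eqxx big1 // => k.
by rewrite -val_eqE modn_small //= => /negPf->.
Qed.

Theorem proposition6 (n t q : nat) :
  0 < n -> 0 < t -> 2 <= q ->
  covers (hamming (t * n) q) (scale_mg t (hamming n q)).
Proof.
case: n => [//|n] _ t_gt0; case: q => [//|q] _.
have le_n_tn : n.+1 <= t * n.+1 by rewrite leq_pmull.
apply: (@covers_hamming_scale _ _ _ _ (fun k => inord (k %% n.+1))
          (widen_ord le_n_tn)).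
  by move=> i; apply/val_inj; rewrite /= inordK modn_small.
move=> i; rewrite -[RHS](card_mod_fibre t (ltn_ord i)); apply: eq_card => k.
by rewrite !inE -val_eqE /= inordK // ltn_pmod.
Qed.
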